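(* Let $p$ be a prime. The matrix $(L(n,k,0,p))_{n,k\ge0}$ has the properties that for each $k\ge0$ there is $i\in\{0,\dots,p-1\}$ with $L(n,k,0,p)=e(n,k,i,p)$ for all $n\ge0$, and $L(n,n,0,p)=1$ for all $n\ge 0$; moreover it is the unique matrix $(a(n,k))_{n,k\ge0}$ with these two properties (each column equal to $(e(n,k,i,p))_{n\ge0}$ for some $i$, and all main-diagonal entries equal to $1$).
   Context: $e(n,k,j,p)$ is the number of $k$-element subsets of $\{1,\dots,n\}$ whose sum of elements is congruent to $j$ modulo $p$ (the empty set has sum $0$). $\begin{bmatrix} n\\ k\end{bmatrix}_q$ is the Gaussian binomial coefficient (a polynomial in $q$, zero for $k>n$). The $p$-Losanitsch numbers $L(n,k,j,p)$, $0\le j\le p-1$, are defined by $\sum_{j=0}^{p-1}L(n,k,j,p)q^j\equiv\begin{bmatrix} n\\ k\end{bmatrix}_q\pmod{q^p-1}$, i.e. $L(n,k,j,p)$ is the sum of the coefficients of $q^m$ in $\begin{bmatrix} n\\ k\end{bmatrix}_q$ over all $m\equiv j\pmod p$. *)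

From mathcomp Require Import all_boot all_order all_algebra.
Set Implicit Arguments. Unset Strict Implicit. Unset Printing Implicit Defensive.
Import GRing.Theory.
Local Open Scope ring_scope.

(* e(n,k,j,p): number of k-element subsets of {1,...,n} whose element sum
   is congruent to j mod p.  {1,...,n} is represented by 'I_n via i |-> i+1. *)
Definition e_cnt (n k j p : nat) : nat :=
  #|[set A : {set 'I_n} | (#|A| == k) &&
      ((\sum_(i in A) (i.+1 : nat)) %% p == j %% p)%N]|.

Fixpoint gauss_binom (n k : nat) : {poly int} :=
  match n, k with
  | _, 0 => 1
  | 0, _.+1 => 0
  | n'.+1, k'.+1 => gauss_binom n' k' + 'X^(k'.+1) * gauss_binom n' k'.+1
  end.

Definition Los (n k j p : nat) : int :=
  \sum_(m < size (gauss_binom n k) | (m %% p == j %% p)%N) (gauss_binom n k)`_m.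

From mathcomp Require Import all_boot all_order all_algebra.

(* The generating polynomial of the element sums of the k-subsets of {1..n}
   satisfies the q-Pascal recurrence of [n choose k]_q up to the factor
   q^(k(k+1)/2) (split on whether 1 belongs to the subset), so it equals
   q^(k(k+1)/2) [n choose k]_q.  Summing coefficients over a residue class
   mod p then gives L(n,k,0,p) = e(n,k,k(k+1)/2,p).  On the diagonal,
   e(k,k,i,p) is 1 if i = k(k+1)/2 mod p and 0 otherwise, so a(k,k) = 1 forces
   the residue of i in every column, whence uniqueness. *)

Set Implicit Arguments. Unset Strict Implicit. Unset Printing Implicit Defensive.
Import GRing.Theory.
Local Open Scope ring_scope.

Section ResidueCoefSum.

Variables (R : nzRingType) (p : nat).

Definition residue_coef_sum (P : {poly R}) (j : nat) : R :=
  \sum_(m < size P | (m %% p == j %% p)%N) P`_m.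

Lemma residue_coef_sum_widen (P : {poly R}) j M : (size P <= M)%N ->
  residue_coef_sum P j = \sum_(m < M | (m %% p == j %% p)%N) P`_m.
Proof.
move=> lePM; rewrite /residue_coef_sum.
rewrite (big_ord_widen_cond _ (fun m => m %% p == j %% p)%N (fun m => P`_m) lePM).
rewrite big_mkcond [RHS]big_mkcond; apply: eq_bigr => m _.
case: (ltnP m (size P)) => [_|lePm]; first by rewrite andbT.
by rewrite andbF (nth_default 0 lePm) if_same.
Qed.

Lemma residue_coef_sum_sum (I : eqType) (r : seq I) (P : pred I)
    (F : I -> {poly R}) j :
  residue_coef_sum (\sum_(i <- r | P i) F i) j =
  \sum_(i <- r | P i) residue_coef_sum (F i) j.
Proof.
set M := (\max_(i <- r | P i) size (F i))%N.
rewrite (residue_coef_sum_widen _ (size_sum _ _ _)) -/M.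
under eq_bigr do rewrite coef_sum.
rewrite exchange_big /= big_seq_cond [RHS]big_seq_cond.
apply: eq_bigr => i /andP[ri Pi].
by rewrite (residue_coef_sum_widen j (leq_bigmax_seq (F := size \o F) i ri Pi)).
Qed.

Lemma residue_coef_sumXn t j :
  residue_coef_sum ('X^t : {poly R}) j = (t %% p == j %% p)%N%:R.
Proof.
rewrite /residue_coef_sum size_polyXn big_mkcond big_ord_recr /= big1 ?add0r.
  by rewrite coefXn eqxx; case: eqP.
by move=> i _; rewrite coefXn (ltn_eqF (ltn_ord i)) if_same.
Qed.

Lemma residue_coef_sum_mulXn t (P : {poly R}) j :
  residue_coef_sum ('X^t * P) (t + j) = residue_coef_sum P j.
Proof.
have leXtP : (size ('X^t * P)%R <= t + size P)%N.
  by apply: leq_trans (size_mul_leq _ _) _; rewrite size_polyXn.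
rewrite (residue_coef_sum_widen _ leXtP) big_split_ord /= big1 ?add0r.
  apply: eq_big => [m|m _] /=; first by rewrite eqn_modDl.
  by rewrite coefXnM ltnNge leq_addr addKn.
by move=> m _; rewrite coefXnM ltn_ord.
Qed.

End ResidueCoefSum.

Lemma LosE n k j p : Los n k j p = residue_coef_sum p (gauss_binom n k) j.
Proof. by []. Qed.

Definition subset_sum n (A : {set 'I_n}) : nat := \sum_(i in A) i.+1.

Definition subset_sum_gf n k : {poly int} :=
  \sum_(A : {set 'I_n} | #|A| == k) 'X^(subset_sum A).

Lemma residue_coef_sum_subset_sum_gf p n k j :
  residue_coef_sum p (subset_sum_gf n k) j = (e_cnt n k j p)%:Z.
Proof.
rewrite residue_coef_sum_sum /e_cnt -sum1_card -natz natr_sum.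
rewrite big_mkcond [RHS]big_mkcond /=; apply: eq_bigr => A _.
rewrite residue_coef_sumXn inE.
by case: (#|A| == k); case: (_ == _).
Qed.

Section ShiftSet.

Variable n : nat.

Definition shift_set (B : {set 'I_n}) : {set 'I_n.+1} := lift ord0 @: B.
Definition unshift_set (A : {set 'I_n.+1}) : {set 'I_n} := lift ord0 @^-1: A.

Lemma card_shift_set B : #|shift_set B| = #|B|.
Proof. exact/card_imset/lift_inj. Qed.

Lemma ord0_shift_set B : (ord0 \in shift_set B) = false.
Proof. by apply/imsetP => -[j _ /eqP]; rewrite (negbTE (neq_lift _ _)). Qed.

Lemma subset_sum_shift_set B : subset_sum (shift_set B) = (subset_sum B + #|B|)%N.
Proof.
rewrite /subset_sum big_imset /=; last by move=> x y _ _; apply: lift_inj.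
rewrite -sum1_card -big_split; apply: eq_bigr => i _.
by rewrite /= /bump add1n addn1.
Qed.

Lemma shift_setK : cancel shift_set unshift_set.
Proof. by move=> B; apply/setP => j; rewrite inE mem_imset //; apply: lift_inj. Qed.

Lemma unshift_setU0 (A : {set 'I_n.+1}) : unshift_set (ord0 |: A) = unshift_set A.
Proof. by apply/setP => j; rewrite !inE eq_sym (negbTE (neq_lift _ _)). Qed.

Lemma unshift_setK (A : {set 'I_n.+1}) :
  ord0 \notin A -> shift_set (unshift_set A) = A.
Proof.
move=> A0; apply/setP => x; case: (unliftP ord0 x) => [j ->|->].
  by rewrite mem_imset ?inE //; apply: lift_inj.
by rewrite ord0_shift_set (negbTE A0).
Qed.

Lemma unshift_setK0 (A : {set 'I_n.+1}) :
  ord0 \in A -> ord0 |: shift_set (unshift_set A) = A.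
Proof.
move=> A0; rewrite -{1}(setD1K A0) unshift_setU0 unshift_setK ?setD11 //.
exact: setD1K.
Qed.

End ShiftSet.

Lemma subset_sum_gf_n0 n : subset_sum_gf n 0 = 1.
Proof.
rewrite /subset_sum_gf (big_pred1 set0) => [|A]; last by rewrite /= cards_eq0.
by rewrite /subset_sum big_set0 expr0.
Qed.

Lemma subset_sum_gf_0S k : subset_sum_gf 0 k.+1 = 0.
Proof.
rewrite /subset_sum_gf big_pred0 // => A.
by apply/negbTE; rewrite neq_ltn (leq_ltn_trans (max_card _)) ?card_ord.
Qed.

Lemma subset_sum_gf_ord0_in n k :
  \sum_(A : {set 'I_n.+1} | (#|A| == k.+1) && (ord0 \in A)) 'X^(subset_sum A)
  = 'X^(k.+1) * subset_sum_gf n k.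
Proof.
rewrite (reindex_onto (fun B => ord0 |: shift_set B) (@unshift_set n)) /=; last first.
  by move=> A /andP[_ A0]; apply: unshift_setK0.
have card_U0shift B : #|ord0 |: shift_set B| = #|B|.+1.
  by rewrite cardsU1 ord0_shift_set card_shift_set.
rewrite /subset_sum_gf mulr_sumr; apply: eq_big => B.
  by rewrite unshift_setU0 shift_setK eqxx setU11 card_U0shift !andbT.
rewrite card_U0shift eqSS => /andP[/andP[/eqP cardB _] _].
rewrite /subset_sum big_setU1 ?ord0_shift_set //= -/(subset_sum _).
rewrite subset_sum_shift_set cardB -exprD -/(subset_sum B).
by rewrite add1n [(k.+1 + _)%N]addnC addnS.
Qed.

Lemma subset_sum_gf_ord0_notin n k :
  \sum_(A : {set 'I_n.+1} | (#|A| == k) && (ord0 \notin A)) 'X^(subset_sum A)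
  = 'X^k * subset_sum_gf n k.
Proof.
rewrite (reindex_onto (@shift_set n) (@unshift_set n)) /=; last first.
  by move=> A /andP[_ A0]; apply: unshift_setK.
rewrite /subset_sum_gf mulr_sumr; apply: eq_big => B.
  by rewrite shift_setK eqxx ord0_shift_set card_shift_set !andbT.
move=> /andP[/andP[/eqP cardB _] _].
by rewrite subset_sum_shift_set -card_shift_set cardB -exprD addnC.
Qed.

Lemma subset_sum_gf_SS n k :
  subset_sum_gf n.+1 k.+1 = 'X^(k.+1) * (subset_sum_gf n k + subset_sum_gf n k.+1).
Proof.
rewrite /subset_sum_gf (bigID (fun A : {set 'I_n.+1} => ord0 \in A)) /= mulrDr.
by rewrite subset_sum_gf_ord0_in subset_sum_gf_ord0_notin.
Qed.

Lemma subset_sum_gfE n k : subset_sum_gf n k = 'X^('C(k.+1, 2)) * gauss_binom n k.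
Proof.
elim: n k => [|n IHn] [|k] /=.
- by rewrite subset_sum_gf_n0 mulr1.
- by rewrite subset_sum_gf_0S mulr0.
- by rewrite subset_sum_gf_n0 mulr1.
have binS2 : 'C(k.+2, 2) = ('C(k.+1, 2) + k.+1)%N by rewrite binS bin1.
rewrite subset_sum_gf_SS !IHn binS2 !mulrDr !mulrA -!exprD.
by rewrite [(k.+1 + 'C(k.+1, 2))%N]addnC [(k.+1 + (_ + _))%N]addnC.
Qed.

Lemma gauss_binom_small n k : (n < k)%N -> gauss_binom n k = 0.
Proof. by elim: n k => [|n IHn] [|k] //= ltnk; rewrite !IHn ?mulr0 ?addr0 // ltnW. Qed.

Lemma gauss_binomnn n : gauss_binom n n = 1.
Proof. by elim: n => //= n ->; rewrite gauss_binom_small ?mulr0 ?addr0. Qed.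

Lemma eq_e_cnt_mod n k p j1 j2 :
  j1 = j2 %[mod p] -> e_cnt n k j1 p = e_cnt n k j2 p.
Proof. by rewrite /e_cnt => ->. Qed.

Lemma Los0_e_cnt n k p : Los n k 0 p = (e_cnt n k 'C(k.+1, 2) p)%:Z.
Proof.
rewrite LosE -residue_coef_sum_subset_sum_gf subset_sum_gfE.
by rewrite -[X in _ = residue_coef_sum _ _ X]addn0 residue_coef_sum_mulXn.
Qed.

Lemma e_cnt_diag k j p :
  (e_cnt k k j p)%:Z = ('C(k.+1, 2) == j %[mod p])%:R.
Proof.
rewrite -residue_coef_sum_subset_sum_gf subset_sum_gfE gauss_binomnn mulr1.
exact: residue_coef_sumXn.
Qed.

Unset Implicit Arguments.
Theorem proposition5p2 (p : nat) (hp : prime p) :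
  [/\ (forall k : nat, exists2 i : nat, (i < p)%N &
          forall n : nat, Los n k 0 p = (e_cnt n k i p)%:Z),
      (forall n : nat, Los n n 0 p = 1) &
      (forall a : nat -> nat -> int,
         (forall k : nat, exists2 i : nat, (i < p)%N &
            forall n : nat, a n k = (e_cnt n k i p)%:Z) ->
         (forall n : nat, a n n = 1) ->
         forall n k : nat, a n k = Los n k 0 p)].
Proof.
split.
- move=> k; exists ('C(k.+1, 2) %% p)%N; first by rewrite ltn_pmod ?prime_gt0.
  by move=> n; rewrite Los0_e_cnt (eq_e_cnt_mod _ _ (esym (modn_mod _ _))).
- by move=> n; rewrite Los0_e_cnt e_cnt_diag eqxx.
- move=> a col_a diag_a n k; have [i _ a_e] := col_a k.
  have c_i : 'C(k.+1, 2) = i %[mod p].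
    by apply/eqP; move: (diag_a k); rewrite a_e e_cnt_diag; case: eqP.
  by rewrite a_e Los0_e_cnt (eq_e_cnt_mod _ _ c_i).
Qed.
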